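(* For every $J$-unitary $T$ on ${\cal K}$, $$V(T)^{-1}=V(T)^*=V(T^{-1})=J\,V(T^* )\,J.$$
   Context: ${\cal H}$ is a separable complex Hilbert space, ${\cal K}={\cal H}\oplus{\cal H}$, $J=\begin{pmatrix}{\bf 1}&0\\0&-{\bf 1}\end{pmatrix}$. A bounded invertible $T$ on ${\cal K}$ is $J$-unitary if $T^*JT=J$; then $T^*$ and $T^{-1}$ are $J$-unitary, and writing $T=\begin{pmatrix}a&b\\c&d\end{pmatrix}$ the blocks $a,d$ are invertible. Define the unitary $V(T)=\begin{pmatrix}(a^* )^{-1}&bd^{-1}\\-d^{-1}c&d^{-1}\end{pmatrix}$. *)

From HB Require Import structures.
From mathcomp Require Import all_boot all_order all_algebra.
From mathcomp Require Import reals.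
From mathcomp Require Import complex.
From Stdlib Require Import ClassicalEpsilon.
Set Implicit Arguments. Unset Strict Implicit. Unset Printing Implicit Defensive.
Import Order.TTheory GRing.Theory Num.Theory.
Local Open Scope ring_scope.

Section Hilbert.
Variable R : realType.
Local Notation C := (R[i]).

Section IP.
Variable V : lmodType C.
Variable ip : V -> V -> C.

Definition hnorm (x : V) : R := Num.sqrt (complex.Re (ip x x)).

Definition is_inner_product : Prop :=
  [/\ forall (a : C) (x y z : V), ip (a *: x + y) z = a * ip x z + ip y z,
      forall x y : V, ip y x = conjc (ip x y),
      forall x : V, 0 <= ip x x &
      forall x : V, ip x x = 0 -> x = 0].

Definition is_complete : Prop :=
  forall u : nat -> V,
    (forall e : R, 0 < e -> exists N : nat, forall m n, (N <= m)%N -> (N <= n)%N ->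
         hnorm (u m - u n) < e) ->
    exists l : V, forall e : R, 0 < e -> exists N : nat, forall n, (N <= n)%N ->
         hnorm (u n - l) < e.

Definition is_separable : Prop :=
  exists s : nat -> V, forall (x : V) (e : R), 0 < e -> exists n, hnorm (x - s n) < e.

Definition is_sep_hilbert : Prop :=
  [/\ is_inner_product, is_complete & is_separable].

Definition bounded_op (T : V -> V) : Prop :=
  (forall (a : C) (x y : V), T (a *: x + y) = a *: T x + T y) /\
  exists M : R, forall x, hnorm (T x) <= M * hnorm x.

Definition bounded_invertible (T : V -> V) : Prop :=
  bounded_op T /\ exists S, [/\ bounded_op S, cancel T S & cancel S T].

(* the adjoint T^* : the operator S with <T x, y> = <x, S y> for all x, y
   (it exists and is unique for bounded T on a Hilbert space) *)
Definition adj (T : V -> V) : V -> V :=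
  epsilon (inhabits id) (fun S : V -> V => forall x y, ip (T x) y = ip x (S y)).

End IP.

Definition opinv {V : Type} (T : V -> V) : V -> V :=
  epsilon (inhabits id) (fun S : V -> V => cancel T S /\ cancel S T).

Section K.
Variable H : lmodType C.
Variable ip : H -> H -> C.

Definition ipK (u v : (H * H)%type) : C := ip u.1 v.1 + ip u.2 v.2.

Definition Jop (u : (H * H)%type) : (H * H)%type := (u.1, - u.2).

Definition J_unitary (T : (H * H)%type -> (H * H)%type) : Prop :=
  bounded_invertible ipK T /\ adj ipK T \o Jop \o T = Jop.

(* blocks of T = [[a, b], [c, d]] *)
Definition blk_a (T : (H * H)%type -> (H * H)%type) (x : H) : H := (T (x, 0)).1.
Definition blk_b (T : (H * H)%type -> (H * H)%type) (y : H) : H := (T (0, y)).1.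
Definition blk_c (T : (H * H)%type -> (H * H)%type) (x : H) : H := (T (x, 0)).2.
Definition blk_d (T : (H * H)%type -> (H * H)%type) (y : H) : H := (T (0, y)).2.

Definition Vop (T : (H * H)%type -> (H * H)%type) (u : (H * H)%type) : (H * H)%type :=
  (opinv (adj ip (blk_a T)) u.1 + blk_b T (opinv (blk_d T) u.2),
   - opinv (blk_d T) (blk_c T u.1) + opinv (blk_d T) u.2).

End K.
End Hilbert.
Arguments Jop {R H} u.

From HB Require Import structures.
From mathcomp Require Import all_boot all_order all_algebra.
From mathcomp Require Import reals complex ring lra.
From Stdlib Require Import ClassicalEpsilon FunctionalExtensionality.
Set Implicit Arguments. Unset Strict Implicit. Unset Printing Implicit Defensive.
Import Order.TTheory GRing.Theory Num.Theory.
Local Open Scope ring_scope.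
Local Open Scope complex_scope.

(* [V(T)] is the Potapov-Ginzburg transform of [T]: it maps [(x1, (T x)2)] to
   [((T x)1, x2)] for every [x], and the J-unitarity of [T], i.e.
   [|(T x)1|^2 - |(T x)2|^2 = |x1|^2 - |x2|^2] in polarized form, says exactly that this
   correspondence is isometric.  These points exhaust [K], so [V(T)] is a surjective
   isometry, and the same description of [T^-1] and of [T^* = J T^-1 J] identifies its
   inverse with [V(T^-1)] and with [J V(T^* ) J].
   The analytic input is the invertibility of the diagonal blocks [a^*] and [d]: they are
   bounded below by J-unitarity, and a bounded operator that is bounded below and has
   an injective adjoint is onto (by the projection theorem).  The adjoint [T^*] itself
   exists by the Riesz representation theorem. *)

Section Scalars.
Variable R : realType.
Local Notation C := R[i].

Definition sqmod (w : C) : R := complex.Re w ^+ 2 + complex.Im w ^+ 2.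

Lemma sqmod_ge0 w : 0 <= sqmod w.
Proof. by apply: addr_ge0; exact: sqr_ge0. Qed.

Lemma sqmod_eq0 w : sqmod w = 0 -> w = 0.
Proof.
case: w => a b; rewrite /sqmod /= => h.
have /eqP : a ^+ 2 = 0 by have := sqr_ge0 a; have := sqr_ge0 b; lra.
have /eqP : b ^+ 2 = 0 by have := sqr_ge0 a; have := sqr_ge0 b; lra.
by rewrite !sqrf_eq0 => /eqP -> /eqP ->.
Qed.

Lemma sqmodM a b : sqmod (a * b) = sqmod a * sqmod b.
Proof. by case: a => ? ?; case: b => ? ?; rewrite /sqmod /=; ring. Qed.

Lemma sqmodJ a : sqmod (conjc a) = sqmod a.
Proof. by case: a => ? ?; rewrite /sqmod /=; ring. Qed.

Lemma sqmodN a : sqmod (- a) = sqmod a.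
Proof. by case: a => ? ?; rewrite /sqmod /=; ring. Qed.

Lemma sqmod_real (s : R) : sqmod s%:C = s ^+ 2.
Proof. by rewrite /sqmod /=; ring. Qed.

Lemma sqmod1 : sqmod 1 = 1.
Proof. by rewrite /sqmod /=; ring. Qed.

Lemma Re_sqr_le_sqmod a : complex.Re a ^+ 2 <= sqmod a.
Proof. by rewrite /sqmod lerDl sqr_ge0. Qed.

Lemma mulcJ_sqmod w : w * conjc w = (sqmod w)%:C.
Proof.
by case: w => a b; apply/eqP; rewrite eq_complex /sqmod /=; apply/andP; split; apply/eqP; ring.
Qed.

Lemma ReD (a b : C) : complex.Re (a + b) = complex.Re a + complex.Re b.
Proof. by case: a; case: b. Qed.

Lemma ReN (a : C) : complex.Re (- a) = - complex.Re a.
Proof. by case: a. Qed.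

Lemma ReJ (w : C) : complex.Re (conjc w) = complex.Re w.
Proof. by case: w. Qed.

Lemma Re_realM (s : R) (a : C) : complex.Re (s%:C * a) = s * complex.Re a.
Proof. by case: a => a1 a2 /=; ring. Qed.

Lemma conjcD (a b : C) : conjc (a + b) = conjc a + conjc b.
Proof. by case: a => ? ?; case: b => ? ? /=; rewrite opprD. Qed.

Lemma conjcM (a b : C) : conjc (a * b) = conjc a * conjc b.
Proof.
case: a => ? ?; case: b => ? ?; apply/eqP; rewrite eq_complex /=.
by apply/andP; split; apply/eqP; ring.
Qed.

Lemma conjcN (a : C) : conjc (- a) = - conjc a.
Proof. by case: a. Qed.

End Scalars.

Section LinearMaps.
Variables (S : pzRingType) (U W : lmodType S).

Definition linear_map (f : U -> W) : Prop :=
  forall a x y, f (a *: x + y) = a *: f x + f y.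

Variables (f : U -> W) (f_lin : linear_map f).

Lemma lin0 : f 0 = 0.
Proof. by apply: (addrI (f 0)); rewrite addr0 -{1}(scale1r (f 0)) -f_lin scaler0 addr0. Qed.

Lemma linD x y : f (x + y) = f x + f y.
Proof. by rewrite -[x]scale1r f_lin !scale1r. Qed.

Lemma linZ a x : f (a *: x) = a *: f x.
Proof. by rewrite -[a *: x]addr0 f_lin lin0 addr0. Qed.

Lemma linN x : f (- x) = - f x.
Proof. by rewrite -scaleN1r linZ scaleN1r. Qed.

Lemma linB x y : f (x - y) = f x - f y.
Proof. by rewrite linD linN. Qed.

End LinearMaps.

Lemma linear_map_can (S : pzRingType) (U W : lmodType S) (f : U -> W) g :
  linear_map f -> cancel f g -> cancel g f -> linear_map g.
Proof. by move=> f_lin fK gK a x y; apply: (can_inj fK); rewrite f_lin !gK. Qed.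

Section InnerProduct.
Variable R : realType.
Local Notation C := R[i].
Variables (V : lmodType C) (ip : V -> V -> C).
Hypothesis hip : is_inner_product ip.

Let ip_linl z : linear_map ((ip^~ z) : V -> C^o).
Proof. by case: hip => h _ _ _ a x y; exact: h. Qed.

Lemma ip_sym x y : ip y x = conjc (ip x y).
Proof. by case: hip. Qed.

Lemma ip0l z : ip 0 z = 0.
Proof. exact: (lin0 (ip_linl z)). Qed.
Lemma ipDl x y z : ip (x + y) z = ip x z + ip y z.
Proof. exact: (linD (ip_linl z)). Qed.
Lemma ipZl a x z : ip (a *: x) z = a * ip x z.
Proof. exact: (linZ (ip_linl z)). Qed.
Lemma ipNl x z : ip (- x) z = - ip x z.
Proof. exact: (linN (ip_linl z)). Qed.
Lemma ipBl x y z : ip (x - y) z = ip x z - ip y z.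
Proof. exact: (linB (ip_linl z)). Qed.

Lemma ip0r z : ip z 0 = 0.
Proof. by rewrite ip_sym ip0l conjc0. Qed.
Lemma ipDr x y z : ip z (x + y) = ip z x + ip z y.
Proof. by rewrite ip_sym ipDl conjcD -!ip_sym. Qed.
Lemma ipZr a x z : ip z (a *: x) = conjc a * ip z x.
Proof. by rewrite ip_sym ipZl conjcM -ip_sym. Qed.
Lemma ipNr x z : ip z (- x) = - ip z x.
Proof. by rewrite ip_sym ipNl conjcN -ip_sym. Qed.
Lemma ipBr x y z : ip z (x - y) = ip z x - ip z y.
Proof. by rewrite ipDr ipNr. Qed.

Definition sqnorm (x : V) : R := complex.Re (ip x x).

Lemma ip_sqnorm x : ip x x = (sqnorm x)%:C.
Proof.
case: hip => _ _ /(_ x) + _; rewrite lecE /sqnorm.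
by case: (ip x x) => a b /= /andP[/eqP -> _].
Qed.

Lemma sqnorm_ge0 x : 0 <= sqnorm x.
Proof. by case: hip => _ _ /(_ x) + _; rewrite ip_sqnorm lecR. Qed.

Lemma sqnorm_eq0 x : sqnorm x = 0 -> x = 0.
Proof. by case: hip => _ _ _ h e; apply: h; rewrite ip_sqnorm e. Qed.

Lemma sqnorm0 : sqnorm 0 = 0.
Proof. by rewrite /sqnorm ip0l. Qed.

Lemma sqnormN x : sqnorm (- x) = sqnorm x.
Proof. by rewrite /sqnorm ipNl ipNr opprK. Qed.

Lemma sqnormB x y : sqnorm (x - y) = sqnorm (y - x).
Proof. by rewrite -sqnormN opprB. Qed.

Lemma sqnorm_le0 x : sqnorm x <= 0 -> x = 0.
Proof. by move=> h; apply: sqnorm_eq0; apply/eqP; rewrite eq_le h sqnorm_ge0. Qed.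

Lemma sqnormDZ x y t :
  sqnorm (x + t *: y) = sqnorm x + 2 * complex.Re (t * ip y x) + sqmod t * sqnorm y.
Proof.
rewrite /sqnorm.
have -> : ip (x + t *: y) (x + t *: y) =
    ip x x + (conjc (t * ip y x) + t * ip y x) + (t * conjc t) * ip y y.
  by rewrite ipDl !ipDr !ipZl !ipZr conjcM -ip_sym; ring.
by rewrite !ReD ReJ mulcJ_sqmod Re_realM /=; ring.
Qed.

Lemma sqnormZ a x : sqnorm (a *: x) = sqmod a * sqnorm x.
Proof. by have := sqnormDZ 0 x a; rewrite add0r sqnorm0 ip0r mulr0 /= mulr0 !add0r. Qed.

(* Minimizing over [s] gives Cauchy-Schwarz. *)
Lemma sqnorm_line x y (s : R) :
  sqnorm (x + (- (s%:C * conjc (ip y x))) *: y) =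
  sqnorm x - 2 * s * sqmod (ip y x) + s ^+ 2 * sqmod (ip y x) * sqnorm y.
Proof.
rewrite sqnormDZ sqmodN sqmodM sqmod_real sqmodJ.
have -> : - (s%:C * conjc (ip y x)) * ip y x = (- s * sqmod (ip y x))%:C.
  case: (ip y x) => a b; apply/eqP; rewrite eq_complex /sqmod /=.
  by apply/andP; split; apply/eqP; ring.
by rewrite /=; ring.
Qed.

Lemma cauchy_schwarz x y : sqmod (ip y x) <= sqnorm x * sqnorm y.
Proof.
have [/sqnorm_eq0 ->|y_neq0] := eqVneq (sqnorm y) 0.
  by rewrite ip0l sqnorm0 mulr0 /sqmod /= expr0n /=; lra.
have y_gt0 : 0 < sqnorm y by rewrite lt_def y_neq0 sqnorm_ge0.
have := sqnorm_ge0 (x + (- ((sqnorm y)^-1%:C * conjc (ip y x))) *: y).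
rewrite sqnorm_line.
have -> : (sqnorm y)^-1 ^+ 2 * sqmod (ip y x) * sqnorm y
    = (sqnorm y)^-1 * sqmod (ip y x) by field; rewrite gt_eqF.
move=> h; have : (sqnorm y)^-1 * sqmod (ip y x) <= sqnorm x by lra.
by rewrite -(ler_pM2r y_gt0) mulrAC mulVf ?mul1r // gt_eqF.
Qed.

Lemma parallelogram x y :
  sqnorm (x + y) + sqnorm (x - y) = 2 * sqnorm x + 2 * sqnorm y.
Proof.
have := sqnormDZ x y 1; have := sqnormDZ x y (-1).
by rewrite !scaleN1r !scale1r !mul1r mulN1r sqmodN sqmod1 ReN => -> ->; ring.
Qed.

Lemma sqnormD_le x y : sqnorm (x + y) <= 2 * sqnorm x + 2 * sqnorm y.
Proof. by have := parallelogram x y; have := sqnorm_ge0 (x - y); lra. Qed.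

End InnerProduct.

Section Completeness.
Variable R : realType.
Local Notation C := R[i].
Variables (V : lmodType C) (ip : V -> V -> C).
Local Notation sqnorm := (sqnorm ip).

Definition sq_cauchy (u : nat -> V) : Prop :=
  forall e : R, 0 < e ->
  exists N, forall m n, (N <= m)%N -> (N <= n)%N -> sqnorm (u m - u n) < e.

Definition sq_cvg (u : nat -> V) (l : V) : Prop :=
  forall e : R, 0 < e -> exists N, forall n, (N <= n)%N -> sqnorm (u n - l) < e.

Definition sq_complete : Prop := forall u, sq_cauchy u -> exists l, sq_cvg u l.

Lemma hnorm_lt x (e : R) : 0 < e -> (hnorm ip x < e) = (sqnorm x < e ^+ 2).
Proof.
move=> e_gt0; rewrite /hnorm -[X in _ < X]ger0_norm ?ltW // -sqrtr_sqr ltr_sqrt //.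
exact: exprn_gt0.
Qed.

Lemma hnorm_lt_sqrt x (e : R) : 0 < e -> (hnorm ip x < Num.sqrt e) = (sqnorm x < e).
Proof. by move=> e_gt0; rewrite hnorm_lt ?sqrtr_gt0 // sqr_sqrtr // ltW. Qed.

Lemma sq_completeP : is_complete ip <-> sq_complete.
Proof.
split=> [hc u u_cauchy | hc u u_cauchy].
  have [|l ul] := hc u.
    move=> e e_gt0; have [N hN] := u_cauchy _ (exprn_gt0 2 e_gt0).
    by exists N => m n hm hn; rewrite hnorm_lt // hN.
  exists l => e e_gt0; have [N hN] := ul (Num.sqrt e) ltac:(by rewrite sqrtr_gt0).
  by exists N => n hn; rewrite -hnorm_lt_sqrt // hN.
have [|l ul] := hc u.
  move=> e e_gt0; have [N hN] := u_cauchy (Num.sqrt e) ltac:(by rewrite sqrtr_gt0).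
  by exists N => m n hm hn; rewrite -hnorm_lt_sqrt // hN.
exists l => e e_gt0; have [N hN] := ul _ (exprn_gt0 2 e_gt0).
by exists N => n hn; rewrite hnorm_lt // hN.
Qed.

Definition sq_bounded (f : V -> V) : Prop :=
  exists M, 0 <= M /\ forall x, sqnorm (f x) <= M * sqnorm x.

End Completeness.

Lemma inv_succ_lt (R : realType) (e : R) :
  0 < e -> exists N, forall n, (N <= n)%N -> n.+1%:R^-1 < e.
Proof.
move=> e_gt0; exists (Num.Def.archi_bound e^-1) => n hn.
have : e^-1 < n.+1%:R.
  apply: lt_le_trans (archi_boundP _) _; first by rewrite invr_ge0 ltW.
  by rewrite ler_nat (leq_trans hn).
by rewrite invf_plt // posrE // ltr0Sn.
Qed.

Section Projection.
Variable R : realType.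
Local Notation C := R[i].
Variables (V : lmodType C) (ip : V -> V -> C).
Hypothesis hip : is_inner_product ip.
Hypothesis hc : sq_complete ip.
Local Notation sqnorm := (sqnorm ip).
Local Notation sq_cvg := (sq_cvg ip).

Lemma sqnorm_cvg_le u l (D : R) : sq_cvg u l -> (forall n, sqnorm (u n) <= D) ->
  forall eta, 0 < eta -> exists N, forall n, (N <= n)%N -> sqnorm l <= sqnorm (u n) + eta.
Proof.
move=> ul uD eta eta_gt0.
have D_ge0 : 0 <= D by apply: le_trans (uD 0%N); exact: (sqnorm_ge0 hip).
pose b := Num.min (eta / 2) (eta ^+ 2 / (16 * (D + 1))).
have b_gt0 : 0 < b by rewrite lt_min !divr_gt0 ?exprn_gt0 // mulr_gt0 //; lra.
have [N hN] := ul b b_gt0; exists N => n /hN.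
rewrite lt_min -(sqnormB hip) => /andP[small1 small2].
have := sqnormDZ hip (u n) (l - u n) 1.
rewrite scale1r addrC subrK mul1r sqmod1 mul1r => ->.
set r := complex.Re _; set d := sqnorm (l - u n).
have d_ge0 : 0 <= d by exact: (sqnorm_ge0 hip).
have r2 : r ^+ 2 <= D * d.
  apply: le_trans (Re_sqr_le_sqmod _) _; apply: le_trans (cauchy_schwarz hip _ _) _.
  by apply: ler_wpM2r => //; exact: uD.
have Dd : (D + 1) * d <= eta ^+ 2 / 16.
  move: small2; rewrite ltr_pdivlMr ?mulr_gt0 //; lra.
have : r <= eta / 4 by nra.
lra.
Qed.


Definition midpoint_closed (A : V -> Prop) : Prop :=
  forall x y, A x -> A y -> A ((2%:R^-1 : C) *: (x + y)).

Definition limit_closed (A : V -> Prop) : Prop :=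
  forall u l, (forall n, A (u n)) -> sq_cvg u l -> A l.

Lemma sqmod_half : sqmod (2%:R^-1 : C) = 4^-1.
Proof.
have sqmod2 : sqmod (2%:R : C) = 4 by rewrite /sqmod /=; ring.
apply: (@mulfI _ 4); first by rewrite pnatr_eq0.
by rewrite -{1}sqmod2 -sqmodM mulfV ?pnatr_eq0 // sqmod1 divff // pnatr_eq0.
Qed.

Lemma sqnorm_midpoint x y : sqnorm (x + y) = 4 * sqnorm ((2%:R^-1 : C) *: (x + y)).
Proof. by rewrite (sqnormZ hip) sqmod_half mulrA divff ?mul1r // pnatr_eq0. Qed.

(* The parallelogram law makes every minimizing sequence Cauchy. *)
Lemma min_sqnorm_exists (A : V -> Prop) x0 :
  A x0 -> midpoint_closed A -> limit_closed A ->
  exists2 z, A z & forall w, A w -> sqnorm z <= sqnorm w.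
Proof.
move=> Ax0 A_mid A_lim.
pose E : R -> Prop := fun r => exists2 x, A x & r = sqnorm x.
have E_lb : classical_sets.has_lbound E.
  by exists 0 => r [x _ ->]; exact: (sqnorm_ge0 hip).
have E_inf : classical_sets.has_inf E by split => //; exists (sqnorm x0), x0.
pose d := inf E.
have d_le w : A w -> d <= sqnorm w by move=> Aw; apply: (ge_inf E_lb); exists w.
have near n : exists x, A x /\ sqnorm x < d + n.+1%:R^-1.
  have n_gt0 : 0 < n.+1%:R^-1 :> R by rewrite invr_gt0.
  by have [r [x Ax ->] lt_xd] := inf_adherent n_gt0 E_inf; exists x.
pose u n := proj1_sig (constructive_indefinite_description _ (near n)).
have [Au lt_ud] : (forall n, A (u n)) /\ (forall n, sqnorm (u n) < d + n.+1%:R^-1).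
  by split=> n; case: (proj2_sig (constructive_indefinite_description _ (near n))).
clearbody d u.
have [l ul] : exists l, sq_cvg u l.
  apply: hc => e e_gt0; have [N hN] : exists N, forall n, (N <= n)%N -> n.+1%:R^-1 < e / 4.
    by apply: inv_succ_lt; lra.
  exists N => m n hm hn.
  have := parallelogram hip (u m) (u n); rewrite sqnorm_midpoint.
  have := d_le _ (A_mid _ _ (Au m) (Au n)).
  have := lt_ud m; have := lt_ud n; have := hN m hm; have := hN n hn.
  move: (m.+1%:R^-1) (n.+1%:R^-1) => a b; lra.
exists l => [|w Aw]; first exact: A_lim ul.
apply: le_trans (d_le _ Aw); apply/ler_addgt0Pr => eta eta_gt0.
have u_le n : sqnorm (u n) <= d + 1.
  apply: le_trans (ltW (lt_ud n)) _; rewrite lerD2l invf_le1 ?ltr0Sn //.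
  by rewrite ler1n.
have eta2_gt0 : 0 < eta / 2 by lra.
have [N1 hN1] := sqnorm_cvg_le ul u_le eta2_gt0.
have [N2 hN2] := inv_succ_lt eta2_gt0.
have := hN1 _ (leq_addr N2 N1); have := hN2 _ (leq_addl N1 N2).
have := lt_ud (N1 + N2)%N; move: ((N1 + N2).+1%:R^-1) => a; lra.
Qed.

End Projection.

Section Hilbert.
Variable R : realType.
Local Notation C := R[i].
Variables (V : lmodType C) (ip : V -> V -> C).
Hypothesis hip : is_inner_product ip.
Hypothesis hc : sq_complete ip.
Local Notation sqnorm := (sqnorm ip).
Local Notation sq_cvg := (sq_cvg ip).

Lemma sq_cvg_cauchy u l : sq_cvg u l -> sq_cauchy ip u.
Proof.
move=> ul e e_gt0; have [N hN] : exists N, forall n, (N <= n)%N -> sqnorm (u n - l) < e / 4.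
  by apply: ul; lra.
exists N => m n /hN um /hN un.
have -> : u m - u n = (u m - l) + (l - u n) by rewrite addrA subrK.
apply: le_lt_trans (sqnormD_le hip _ _) _; rewrite (sqnormB hip l); lra.
Qed.

Lemma sq_cvg_unique u l1 l2 : sq_cvg u l1 -> sq_cvg u l2 -> l1 = l2.
Proof.
move=> ul1 ul2; apply/eqP; rewrite -subr_eq0; apply/eqP; apply: (sqnorm_le0 hip).
apply/ler_addgt0Pr => e e_gt0; rewrite add0r.
have [N1 hN1] : exists N, forall n, (N <= n)%N -> sqnorm (u n - l1) < e / 4.
  by apply: ul1; lra.
have [N2 hN2] : exists N, forall n, (N <= n)%N -> sqnorm (u n - l2) < e / 4.
  by apply: ul2; lra.
have := hN1 _ (leq_addr N2 N1); have := hN2 _ (leq_addl N1 N2).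
have -> : l1 - l2 = (u (N1 + N2)%N - l2) - (u (N1 + N2)%N - l1).
  by rewrite opprB [RHS]addrC addrA subrK.
have := sqnormD_le hip (u (N1 + N2)%N - l2) (- (u (N1 + N2)%N - l1)).
rewrite (sqnormN hip); lra.
Qed.

Lemma sq_cvg_map (g : V -> V) u l : linear_map g -> sq_bounded ip g ->
  sq_cvg u l -> sq_cvg (fun n => g (u n)) (g l).
Proof.
move=> g_lin [M [M_ge0 gM]] ul e e_gt0.
have [N hN] : exists N, forall n, (N <= n)%N -> sqnorm (u n - l) < e / (M + 1).
  by apply: ul; apply: divr_gt0 => //; lra.
exists N => n /hN small; rewrite -(linB g_lin); apply: le_lt_trans (gM _) _.
move: small; rewrite ltr_pdivlMr; last by lra.
have := sqnorm_ge0 hip (u n - l); nra.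
Qed.

Lemma min_sqnorm_orthogonal (A : V -> Prop) z h :
  A z -> (forall w, A w -> sqnorm z <= sqnorm w) -> (forall t : C, A (z + t *: h)) ->
  ip h z = 0.
Proof.
move=> Az z_min A_line.
pose s := (sqnorm h + 1)^-1.
have h_ge0 := sqnorm_ge0 hip h.
have s_gt0 : 0 < s by rewrite invr_gt0; lra.
have sh_lt1 : s * sqnorm h < 1 by rewrite mulrC ltr_pdivrMr; lra.
have := z_min _ (A_line (- (s%:C * conjc (ip h z)))).
rewrite (sqnorm_line hip) expr2 => le_z.
have k_ge0 := sqmod_ge0 (ip h z).
apply: sqmod_eq0; apply/eqP; rewrite eq_le k_ge0 andbT.
have : s * sqmod (ip h z) <= 0 by nra.
by rewrite pmulr_rle0.
Qed.

(* The representing vector is a multiple of the element of minimal norm of the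
   hyperplane [f x = 1]. *)
Lemma riesz (f : V -> C) : linear_map (f : V -> C^o) ->
  (exists M, 0 <= M /\ forall x, sqmod (f x) <= M * sqnorm x) ->
  exists z, forall x, f x = ip x z.
Proof.
move=> f_lin [M [M_ge0 fM]].
have f0 : f 0 = 0 := lin0 f_lin.
have fD x y : f (x + y) = f x + f y := linD f_lin x y.
have fZ a x : f (a *: x) = a * f x := linZ f_lin a x.
have fB x y : f (x - y) = f x - f y := linB f_lin x y.
have [[x1 fx1]|f_eq0] := classic (exists x1, f x1 != 0); last first.
  exists 0 => x; rewrite (ip0r hip); apply/eqP/negP => fx.
  by apply: f_eq0; exists x; exact/negP.
pose A x := f x = 1.
have A_mid : midpoint_closed A.
  move=> x y; rewrite /A fZ fD => -> ->.
  by rewrite -mulr2n mulVf // pnatr_eq0.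
have A_lim : limit_closed ip A.
  move=> u l Au ul; suff : sqmod (1 - f l) = 0.
    by move/sqmod_eq0/eqP; rewrite subr_eq0 eq_sym => /eqP.
  apply/eqP; rewrite eq_le sqmod_ge0 andbT.
  apply/ler_addgt0Pr => e e_gt0; rewrite add0r.
  have [N hN] : exists N, forall n, (N <= n)%N -> sqnorm (u n - l) < e / (M + 1).
    by apply: ul; apply: divr_gt0 => //; lra.
  have small := hN N (leqnn N); move: small; rewrite ltr_pdivlMr; last by lra.
  have := fM (u N - l); rewrite fB Au.
  have := sqnorm_ge0 hip (u N - l); nra.
have [z0 Az0 z0_min] := min_sqnorm_exists hip hc (x0 := (f x1)^-1 *: x1) (A := A)
  ltac:(by rewrite /A fZ mulVf) A_mid A_lim.
have ker_orth h : f h = 0 -> ip h z0 = 0.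
  move=> fh; apply: (min_sqnorm_orthogonal Az0 z0_min) => t.
  by rewrite /A fD fZ fh mulr0 addr0.
have z0_neq0 : sqnorm z0 != 0.
  apply/eqP => /(sqnorm_eq0 hip) z0_eq0; move: Az0.
  by rewrite /A z0_eq0 f0 => /eqP; rewrite eq_sym oner_eq0.
(* [x - f x z0] lies in the kernel of [f], hence [<x, z0> = f x |z0|^2]. *)
exists ((sqnorm z0)^-1%:C *: z0) => x.
have := ker_orth (x - f x *: z0); rewrite fB fZ Az0 mulr1 subrr => /(_ erefl).
rewrite (ipBl hip) (ipZl hip) (ip_sqnorm hip) => /eqP; rewrite subr_eq0 => /eqP ip_xz0.
rewrite (ipZr hip) ip_xz0; case: (f x) => a b; apply/eqP; rewrite eq_complex /=.
by apply/andP; split; apply/eqP; field.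
Qed.


Lemma half_twice (y : V) : (2%:R^-1 : C) *: (y + y) = y.
Proof.
have -> : y + y = (2%:R : C) *: y by rewrite scaler_nat mulr2n.
by rewrite scalerA mulVf ?scale1r // pnatr_eq0.
Qed.

(* A bounded operator that is bounded below has closed range, and its range is dense
   when the adjoint is injective: the distance from [y] to the range is attained at
   some [g x - y], which is orthogonal to the range, i.e. killed by the adjoint. *)
Lemma bounded_below_surj (g g' : V -> V) : linear_map g -> sq_bounded ip g ->
  (forall x, sqnorm x <= sqnorm (g x)) -> (forall x y, ip (g x) y = ip x (g' y)) ->
  (forall y, g' y = 0 -> y = 0) -> forall y, exists x, g x = y.
Proof.
move=> g_lin g_bd g_below g_adj g'_inj y.
pose A v := exists x, v = g x - y.
have A_mid : midpoint_closed A.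
  move=> _ _ [x ->] [x' ->]; exists ((2%:R^-1 : C) *: (x + x')).
  rewrite (linZ g_lin) (linD g_lin) -[X in _ = _ - X](half_twice y).
  by rewrite -scalerBr opprD addrACA.
have A_lim : limit_closed ip A.
  move=> u l Au ul.
  pose xs n := proj1_sig (constructive_indefinite_description _ (Au n)).
  have xsE n : u n = g (xs n) - y := proj2_sig (constructive_indefinite_description _ (Au n)).
  have gxs : sq_cvg (fun n => g (xs n)) (l + y).
    move=> e /ul[N hN]; exists N => n /hN.
    by rewrite xsE opprD addrA addrAC.
  have [xl xsl] : exists xl, sq_cvg xs xl.
    apply: hc => e /(sq_cvg_cauchy gxs)[N hN]; exists N => m n hm hn.
    by apply: le_lt_trans (g_below _) _; rewrite (linB g_lin) hN.
  by exists xl; rewrite -(sq_cvg_unique gxs (sq_cvg_map g_lin g_bd xsl)) addrK.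
have [_ [x ->] v_min] := min_sqnorm_exists hip hc (ex_intro _ 0 erefl) A_mid A_lim.
exists x; apply/eqP; rewrite -subr_eq0; apply/eqP; apply: g'_inj.
have range_orth k : ip (g k) (g x - y) = 0.
  apply: (min_sqnorm_orthogonal (A := A)) => //; first by exists x.
  by move=> t; exists (x + t *: k); rewrite (linD g_lin) (linZ g_lin) addrAC.
by apply: (sqnorm_eq0 hip); rewrite /sqnorm -g_adj range_orth.
Qed.

End Hilbert.

Lemma opinv_can (T : Type) (f g : T -> T) : cancel f g -> cancel g f -> opinv f = g.
Proof.
move=> fK gK.
have [|fK' _] := epsilon_spec (inhabits id) (fun S : T -> T => cancel f S /\ cancel S f).
  by exists g.
by apply: functional_extensionality => y; rewrite /opinv -[y in LHS]gK fK'.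
Qed.

Section Adjoint.
Variable R : realType.
Local Notation C := R[i].
Variables (V : lmodType C) (ip : V -> V -> C).
Hypothesis hip : is_inner_product ip.
Local Notation sqnorm := (sqnorm ip).

Lemma adj_eq (f g : V -> V) : (forall x y, ip (f x) y = ip x (g y)) -> adj ip f = g.
Proof.
move=> fg; have f_adj : forall x y, ip (f x) y = ip x (adj ip f y).
  pose P (S : V -> V) := forall x y, ip (f x) y = ip x (S y).
  by apply: (epsilon_spec (inhabits id) P); exists g.
apply: functional_extensionality => y; apply/eqP; rewrite -subr_eq0; apply/eqP.
by apply: (sqnorm_eq0 hip); rewrite /sqnorm (ipBr hip) -f_adj -fg subrr.
Qed.

Lemma adjP (f : V -> V) : sq_complete ip -> linear_map f -> sq_bounded ip f ->
  forall x y, ip (f x) y = ip x (adj ip f y).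
Proof.
move=> hc f_lin [M [M_ge0 fM]].
have rep y : exists z, forall x, ip (f x) y = ip x z.
  apply: (riesz hip hc) => [a x x' | ]; first by rewrite f_lin (ipDl hip) (ipZl hip).
  exists (sqnorm y * M); split => [|x]; first by rewrite mulr_ge0 ?(sqnorm_ge0 hip).
  apply: le_trans (cauchy_schwarz hip _ _) _; rewrite -mulrA.
  by apply: ler_wpM2l; [exact: sqnorm_ge0 | exact: fM].
pose g y := proj1_sig (constructive_indefinite_description _ (rep y)).
have fg x y : ip (f x) y = ip x (g y) :=
  proj2_sig (constructive_indefinite_description _ (rep y)) x.
by rewrite (adj_eq fg).
Qed.

End Adjoint.

Section DirectSum.
Variable R : realType.
Local Notation C := R[i].
Variables (H : lmodType C) (ip : H -> H -> C).
Hypothesis hip : is_inner_product ip.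
Local Notation K := (H * H)%type.
Local Notation ipK := (ipK ip).

Lemma sqnormK (u : K) : sqnorm ipK u = sqnorm ip u.1 + sqnorm ip u.2.
Proof. exact: ReD. Qed.

Lemma ipK_inner_product : is_inner_product ipK.
Proof.
split=> [a x y z | x y | x | x].
- by rewrite /ipK /= !(ipDl hip) !(ipZl hip); ring.
- by rewrite /ipK conjcD -!(ip_sym hip).
- by rewrite /ipK !(ip_sqnorm hip) addr_ge0 // lecR (sqnorm_ge0 hip).
- move/(congr1 (@complex.Re R)); rewrite -/(sqnorm ipK x) sqnormK /= => x0.
  have := sqnorm_ge0 hip x.1; have := sqnorm_ge0 hip x.2.
  by case: x x0 => x1 x2 /= x0 ? ?; congr (_, _); apply: (sqnorm_le0 hip); lra.
Qed.

Lemma ipK_complete : sq_complete ip -> sq_complete ipK.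
Proof.
move=> hc u u_cauchy.
have cauchy_comp (p : K -> H) : (forall v : K, sqnorm ip (p v) <= sqnorm ipK v) ->
    linear_map p -> exists l, sq_cvg ip (fun n => p (u n)) l.
  move=> p_le p_lin; apply: hc => e /u_cauchy[N hN]; exists N => m n hm hn.
  by rewrite -(linB p_lin); apply: le_lt_trans (p_le _) (hN _ _ hm hn).
have [l1 ul1] : exists l, sq_cvg ip (fun n => (u n).1) l.
  by apply: cauchy_comp => [v|a x y //]; rewrite sqnormK lerDl (sqnorm_ge0 hip).
have [l2 ul2] : exists l, sq_cvg ip (fun n => (u n).2) l.
  by apply: cauchy_comp => [v|a x y //]; rewrite sqnormK lerDr (sqnorm_ge0 hip).
exists (l1, l2) => e e_gt0.
have [N1 hN1] : exists N, forall n, (N <= n)%N -> sqnorm ip ((u n).1 - l1) < e / 2.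
  by apply: ul1; lra.
have [N2 hN2] : exists N, forall n, (N <= n)%N -> sqnorm ip ((u n).2 - l2) < e / 2.
  by apply: ul2; lra.
exists (N1 + N2)%N => n hn; rewrite sqnormK.
have := hN1 n (leq_trans (leq_addr _ _) hn); have := hN2 n (leq_trans (leq_addl _ _) hn).
rewrite /=; lra.
Qed.

Lemma ipK_Jop (u v : K) : ipK u (Jop v) = ip u.1 v.1 - ip u.2 v.2.
Proof. by rewrite /ipK /Jop /= (ipNr hip). Qed.

Lemma JopK : involutive (@Jop R H).
Proof. by case=> u1 u2; rewrite /Jop /= opprK. Qed.

Lemma Jop_linear : linear_map (@Jop R H).
Proof. by case=> ? ? [? ?] a; rewrite /Jop /=; congr (_, _); rewrite opprD -scalerN. Qed.

Lemma sqnorm_Jop (u : K) : sqnorm ipK (Jop u) = sqnorm ipK u.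
Proof. by rewrite !sqnormK (sqnormN hip). Qed.

End DirectSum.

Lemma linear_map_comp (S : pzRingType) (U V W : lmodType S) (f : V -> W) (g : U -> V) :
  linear_map f -> linear_map g -> linear_map (f \o g).
Proof. by move=> f_lin g_lin a x y; rewrite /= g_lin f_lin. Qed.

Lemma inj_surj_inverse (T : Type) (f : T -> T) :
  injective f -> (forall y, exists x, f x = y) -> exists g, cancel f g /\ cancel g f.
Proof.
move=> f_inj f_surj; pose g y := proj1_sig (constructive_indefinite_description _ (f_surj y)).
have gK : cancel g f := fun y => proj2_sig (constructive_indefinite_description _ (f_surj y)).
by exists g; split=> // x; apply: f_inj; rewrite gK.
Qed.

Section BoundedBelow.
Variable R : realType.
Local Notation C := R[i].
Variables (V : lmodType C) (ip : V -> V -> C).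
Hypothesis hip : is_inner_product ip.

Lemma sq_bounded_hnorm (f : V -> V) :
  (exists M, forall x, hnorm ip (f x) <= M * hnorm ip x) -> sq_bounded ip f.
Proof.
move=> [M fM]; exists (M ^+ 2); split=> [|x]; first exact: sqr_ge0.
have := fM x; rewrite /hnorm -/(sqnorm ip _) -/(sqnorm ip x).
rewrite -{2}(sqr_sqrtr (sqnorm_ge0 hip (f x))) -{2}(sqr_sqrtr (sqnorm_ge0 hip x)).
have := sqrtr_ge0 (sqnorm ip (f x)); have := sqrtr_ge0 (sqnorm ip x).
move: (Num.sqrt _) (Num.sqrt _) => b a b_ge0 a_ge0 ab; nra.
Qed.

Lemma below_inj (g : V -> V) : linear_map g ->
  (forall x, sqnorm ip x <= sqnorm ip (g x)) -> injective g.
Proof.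
move=> g_lin g_below x y gxy; apply/eqP; rewrite -subr_eq0; apply/eqP.
apply: (sqnorm_le0 hip).
by have := g_below (x - y); rewrite (linB g_lin) gxy subrr (sqnorm0 hip).
Qed.

End BoundedBelow.

Section JUnitary.
Variable R : realType.
Local Notation C := R[i].
Variables (H : lmodType C) (ip : H -> H -> C).
Hypothesis hip : is_inner_product ip.
Local Notation K := (H * H)%type.
Local Notation ipK := (ipK ip).

Record J_unitary_with (T Ta Ti : K -> K) : Prop := {
  Ju_linear : linear_map T;
  Ju_bounded : sq_bounded ipK T;
  Ju_adjoint : forall x y, ipK (T x) y = ipK x (Ta y);
  Ju_J : forall x, Ta (Jop (T x)) = Jop x;
  Ju_invK : cancel T Ti;
  Ju_Kinv : cancel Ti T;
  Ju_inv_bounded : sq_bounded ipK Ti }.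

Variables T Ta Ti : K -> K.
Hypothesis hT : J_unitary_with T Ta Ti.

Lemma J_unitary_adjE w : Ta w = Jop (Ti (Jop w)).
Proof.
have -> : w = Jop (T (Ti (Jop w))) by rewrite (Ju_Kinv hT) JopK.
by rewrite (Ju_J hT) !JopK (Ju_invK hT).
Qed.

Lemma J_unitary_ipJ p q : ipK (T p) (Jop (T q)) = ipK p (Jop q).
Proof. by rewrite (Ju_adjoint hT) (Ju_J hT). Qed.

Let sq_bounded_Jconj (f : K -> K) : sq_bounded ipK f -> sq_bounded ipK (Jop \o f \o Jop).
Proof.
move=> [M [M_ge0 fM]]; exists M; split=> // x /=.
by rewrite (sqnorm_Jop hip) -(sqnorm_Jop hip x) fM.
Qed.

Lemma J_unitary_adjoint : J_unitary_with Ta T (Jop \o T \o Jop).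
Proof.
have Ti_lin := linear_map_can (Ju_linear hT) (Ju_invK hT) (Ju_Kinv hT).
have Ta_lin : linear_map Ta.
  by move=> a x y; rewrite !J_unitary_adjE (Jop_linear a x y) Ti_lin Jop_linear.
split=> //.
- have := sq_bounded_Jconj (Ju_inv_bounded hT).
  by congr sq_bounded; apply: functional_extensionality => w; rewrite J_unitary_adjE.
- move=> x y; rewrite (ip_sym (ipK_inner_product hip)) -(Ju_adjoint hT).
  by rewrite -(ip_sym (ipK_inner_product hip)).
- by move=> x; rewrite J_unitary_adjE !JopK (Ju_Kinv hT).
- by move=> x /=; rewrite J_unitary_adjE JopK (Ju_Kinv hT) JopK.
- by move=> x /=; rewrite J_unitary_adjE JopK (Ju_invK hT) JopK.
- exact: sq_bounded_Jconj (Ju_bounded hT).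
Qed.

Lemma J_unitary_inverse : J_unitary_with Ti (Jop \o T \o Jop) T.
Proof.
split; first exact: linear_map_can (Ju_linear hT) (Ju_invK hT) (Ju_Kinv hT).
- exact: Ju_inv_bounded hT.
- by move=> x y /=; rewrite -[in RHS](Ju_Kinv hT x) J_unitary_ipJ JopK.
- by move=> x /=; rewrite JopK (Ju_Kinv hT).
- exact: Ju_Kinv hT.
- exact: Ju_invK hT.
- exact: Ju_bounded hT.
Qed.

End JUnitary.

Section Blocks.
Variables (R : realType) (H : lmodType R[i]).
Local Notation K := (H * H)%type.

Lemma fst_linear : linear_map (@fst H H).
Proof. by []. Qed.

Lemma snd_linear : linear_map (@snd H H).
Proof. by []. Qed.

Lemma inl_linear : linear_map (fun x : H => (x, 0) : K).
Proof. by move=> a x y; apply: injective_projections; rewrite /= ?scaler0 ?addr0. Qed.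

Lemma inr_linear : linear_map (fun y : H => (0, y) : K).
Proof. by move=> a x y; apply: injective_projections; rewrite /= ?scaler0 ?addr0. Qed.

Variable T : K -> K.
Hypothesis T_lin : linear_map T.

Lemma blk_a_linear : linear_map (blk_a T).
Proof. exact: linear_map_comp fst_linear (linear_map_comp T_lin inl_linear). Qed.

Lemma blk_b_linear : linear_map (blk_b T).
Proof. exact: linear_map_comp fst_linear (linear_map_comp T_lin inr_linear). Qed.

Lemma blk_d_linear : linear_map (blk_d T).
Proof. exact: linear_map_comp snd_linear (linear_map_comp T_lin inr_linear). Qed.

Lemma T_blocks x1 x2 :
  T (x1, x2) = (blk_a T x1 + blk_b T x2, blk_c T x1 + blk_d T x2).
Proof.
have -> : (x1, x2) = (x1, 0) + (0, x2) :> K.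
  by apply: injective_projections; rewrite /= ?addr0 ?add0r.
by rewrite (linD T_lin).
Qed.

End Blocks.

Section JUnitaryBlocks.
Variable R : realType.
Local Notation C := R[i].
Variables (H : lmodType C) (ip : H -> H -> C).
Hypothesis hip : is_inner_product ip.
Local Notation K := (H * H)%type.
Local Notation ipK := (ipK ip).
Local Notation sqnorm := (sqnorm ip).

Variables T Ta Ti : K -> K.
Hypothesis hT : J_unitary_with ip T Ta Ti.

Lemma blk_a_bounded : sq_bounded ip (blk_a T).
Proof.
have [M [M_ge0 TM]] := Ju_bounded hT; exists M; split=> // x.
have := TM (x, 0); rewrite !sqnormK (sqnorm0 hip) addr0 /blk_a.
by have := sqnorm_ge0 hip (T (x, 0)).2; lra.
Qed.

Lemma blk_d_bounded : sq_bounded ip (blk_d T).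
Proof.
have [M [M_ge0 TM]] := Ju_bounded hT; exists M; split=> // x.
have := TM (0, x); rewrite !sqnormK (sqnorm0 hip) add0r /blk_d.
by have := sqnorm_ge0 hip (T (0, x)).1; lra.
Qed.

(* J-unitarity gives [|a x|^2 - |c x|^2 = |x|^2] and [|d y|^2 - |b y|^2 = |y|^2]. *)
Lemma blk_a_below x : sqnorm x <= sqnorm (blk_a T x).
Proof.
have := J_unitary_ipJ hT (x, 0) (x, 0); rewrite !(ipK_Jop hip) (ip0l hip) subr0.
move/(congr1 (@complex.Re R)); rewrite ReD ReN -!/(sqnorm _) => e.
by have := sqnorm_ge0 hip (blk_c T x); rewrite /blk_a /blk_c; lra.
Qed.

Lemma blk_d_below y : sqnorm y <= sqnorm (blk_d T y).
Proof.
have := J_unitary_ipJ hT (0, y) (0, y); rewrite !(ipK_Jop hip) (ip0l hip) sub0r.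
move/(congr1 (@complex.Re R)); rewrite ReD !ReN -!/(sqnorm _) => e.
by have := sqnorm_ge0 hip (blk_b T y); rewrite /blk_b /blk_d; lra.
Qed.

Lemma blk_a_adjoint x y : ip (blk_a T x) y = ip x (blk_a Ta y).
Proof.
by have := Ju_adjoint hT (x, 0) (y, 0); rewrite /ipK /= (ip0r hip) (ip0l hip) !addr0.
Qed.

Lemma blk_d_adjoint x y : ip (blk_d T x) y = ip x (blk_d Ta y).
Proof.
by have := Ju_adjoint hT (0, x) (0, y); rewrite /ipK /= (ip0r hip) (ip0l hip) !add0r.
Qed.

End JUnitaryBlocks.


Lemma bounded_below_inverse (R : realType) (V : lmodType R[i]) (ip : V -> V -> R[i])
    (g g' : V -> V) :
  is_inner_product ip -> sq_complete ip -> linear_map g -> sq_bounded ip g ->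
  (forall x, sqnorm ip x <= sqnorm ip (g x)) -> (forall x y, ip (g x) y = ip x (g' y)) ->
  linear_map g' -> (forall x, sqnorm ip x <= sqnorm ip (g' x)) ->
  exists h, cancel g h /\ cancel h g.
Proof.
move=> hip hc g_lin g_bd g_below gg' g'_lin g'_below.
apply: inj_surj_inverse; first exact: below_inj g_lin g_below.
apply: (bounded_below_surj hip hc g_lin g_bd g_below gg') => y g'y0.
by apply: (below_inj hip g'_lin g'_below); rewrite g'y0 (lin0 g'_lin).
Qed.

Section PotapovGinzburg.
Variable R : realType.
Local Notation C := R[i].
Variables (H : lmodType C) (ip : H -> H -> C).
Hypothesis hip : is_inner_product ip.
Hypothesis hc : sq_complete ip.
Local Notation K := (H * H)%type.
Local Notation ipK := (ipK ip).

Variables T Ta Ti : K -> K.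
Hypothesis hT : J_unitary_with ip T Ta Ti.
Let hTa := J_unitary_adjoint hip hT.
Let T_lin := Ju_linear hT.

Lemma blk_d_inverse : exists h, cancel (blk_d T) h /\ cancel h (blk_d T).
Proof.
exact: (bounded_below_inverse hip hc (blk_d_linear T_lin) (blk_d_bounded hip hT)
  (blk_d_below hip hT) (blk_d_adjoint hip hT) (blk_d_linear (Ju_linear hTa))
  (blk_d_below hip hTa)).
Qed.

Lemma blk_a_adj_inverse : exists h, cancel (blk_a Ta) h /\ cancel h (blk_a Ta).
Proof.
exact: (bounded_below_inverse hip hc (blk_a_linear (Ju_linear hTa)) (blk_a_bounded hip hTa)
  (blk_a_below hip hTa) (blk_a_adjoint hip hTa) (blk_a_linear T_lin) (blk_a_below hip hT)).
Qed.

Lemma Vop_graph x : Vop ip T (x.1, (T x).2) = ((T x).1, x.2).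
Proof.
have [di [dK Kd]] := blk_d_inverse.
have [ai [aK Ka]] := blk_a_adj_inverse.
have di_lin := linear_map_can (blk_d_linear T_lin) dK Kd.
rewrite /Vop (adj_eq hip (blk_a_adjoint hip hT)) (opinv_can aK Ka) (opinv_can dK Kd).
case: x => x1 x2 /=; rewrite (T_blocks T_lin) /=.
set w := di (blk_c T x1); rewrite (linD di_lin) dK.
(* [T] maps [(x1, - d^-1 c x1)] into [H (+) 0], where J-unitarity makes [a^*] a
   left inverse. *)
have Tu : T (x1, - w) = (blk_a T x1 - blk_b T w, 0).
  rewrite (T_blocks T_lin) (linN (blk_b_linear T_lin)) (linN (blk_d_linear T_lin)).
  by rewrite /w Kd subrr.
have aTa : blk_a Ta (blk_a T x1 - blk_b T w) = x1.
  by have := Ju_J hT (x1, - w); rewrite Tu /Jop /= oppr0 => /(congr1 fst).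
rewrite -[in ai x1]aTa aK (linD (blk_b_linear T_lin)); congr (_, _).
  by rewrite addrA subrK.
by rewrite addKr.
Qed.

Lemma graph_surj p q : exists x : K, x.1 = p /\ (T x).2 = q.
Proof.
have [di [_ Kd]] := blk_d_inverse.
by exists (p, di (q - blk_c T p)); split; rewrite // (T_blocks T_lin) /= Kd addrC subrK.
Qed.

Lemma Vop_isometry u v : ipK (Vop ip T u) (Vop ip T v) = ipK u v.
Proof.
case: u v => [u1 u2] [v1 v2].
have [x [<- <-]] := graph_surj u1 u2; have [y [<- <-]] := graph_surj v1 v2.
rewrite !Vop_graph; have := J_unitary_ipJ hT x y; rewrite !(ipK_Jop hip) /ipK /=.
by move/eqP; rewrite subr_eq => /eqP ->; ring.
Qed.

End PotapovGinzburg.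

Section Inversion.
Variable R : realType.
Variables (H : lmodType R[i]) (ip : H -> H -> R[i]).
Hypothesis hip : is_inner_product ip.
Hypothesis hc : sq_complete ip.
Variables T Ta Ti : (H * H)%type -> (H * H)%type.
Hypothesis hT : J_unitary_with ip T Ta Ti.

Lemma Vop_inverse : cancel (Vop ip Ti) (Vop ip T).
Proof.
have hTi := J_unitary_inverse hT.
case=> p q; have [y [<- <-]] := graph_surj hip hc hTi p q.
rewrite (Vop_graph hip hc hTi).
have -> : ((Ti y).1, y.2) = ((Ti y).1, (T (Ti y)).2) by rewrite (Ju_Kinv hT).
by rewrite (Vop_graph hip hc hT) (Ju_Kinv hT).
Qed.

End Inversion.

Section Relations.
Variable R : realType.
Variables (H : lmodType R[i]) (ip : H -> H -> R[i]).
Hypothesis hip : is_inner_product ip.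
Hypothesis hc : sq_complete ip.
Variables T Ta Ti : (H * H)%type -> (H * H)%type.
Hypothesis hT : J_unitary_with ip T Ta Ti.

Lemma Vop_relations :
  [/\ opinv (Vop ip T) = adj (ipK ip) (Vop ip T),
      adj (ipK ip) (Vop ip T) = Vop ip Ti &
      Vop ip Ti = Jop \o Vop ip Ta \o Jop].
Proof.
have hTi := J_unitary_inverse hT; have hTa := J_unitary_adjoint hip hT.
have V_adj : adj (ipK ip) (Vop ip T) = Vop ip Ti.
  apply: (adj_eq (ipK_inner_product hip)) => u w.
  by rewrite -{1}(Vop_inverse hip hc hT w) (Vop_isometry hip hc hT).
split=> //.
  by rewrite V_adj (opinv_can (Vop_inverse hip hc hTi) (Vop_inverse hip hc hT)).
apply: functional_extensionality => -[p q].
have [y [<- <-]] := graph_surj hip hc hTi p q.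
have TaJ : Ta (Jop y) = Jop (Ti y) by rewrite (J_unitary_adjE hT) JopK.
rewrite /= (Vop_graph hip hc hTi).
have -> : Jop (y.1, (Ti y).2) = ((Jop y).1, (Ta (Jop y)).2) by rewrite TaJ.
by rewrite (Vop_graph hip hc hTa) TaJ /Jop /= opprK.
Qed.

End Relations.

Theorem proposition3p18 (R : realType) (H : lmodType R[i]) (ip : H -> H -> R[i])
  (hH : is_sep_hilbert ip)
  (T : (H * H)%type -> (H * H)%type) (hT : J_unitary ip T) :
  [/\ opinv (Vop ip T) = adj (ipK ip) (Vop ip T),
      adj (ipK ip) (Vop ip T) = Vop ip (opinv T) &
      Vop ip (opinv T) = Jop \o Vop ip (adj (ipK ip) T) \o Jop].
Proof.
case: hH => hip /sq_completeP hc _.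
have hipK := ipK_inner_product hip.
case: hT => [[[T_lin T_hbd] [S [[_ S_hbd] TS ST]]] TJ].
have T_bd := sq_bounded_hnorm hipK T_hbd.
have hTJ : J_unitary_with ip T (adj (ipK ip) T) S.
  split=> //; first exact: (adjP (f := T) hipK (ipK_complete hip hc) T_lin T_bd).
    by move=> x; rewrite -[in RHS]TJ.
  exact: (sq_bounded_hnorm (f := S) hipK S_hbd).
rewrite (opinv_can TS ST); exact (Vop_relations hip hc hTJ).
Qed.
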